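(* Fix integers $p\ge 3$, $q\ge 1$ and a real $\eta$ with $0<\eta<\frac{1}{7p^5q}$. For all sufficiently large $n$, for the graph $G$ and partition $V_1,\dots,V_p$ described in the context, the set $W=\bigcup_{i=1}^p W_i$, where $W_i=\{v\in V_i: d_{V_i}(v)\ge 2\eta n\}$, satisfies $|W|\le \frac12\eta n$.
   Context: $B_{p,q}=K_p\nabla qK_1$ is the join of a clique $K_p$ and an independent set of $q$ vertices. $\mathcal{G}(n,p,q)$ is the set of $n$-vertex graphs with chromatic number greater than $p$ that contain no subgraph isomorphic to $B_{p,q}$ and have the maximum number of edges among all such graphs. $G$ is a graph in $\mathcal{G}(n,p,q)$ whose minimum degree equals $\min_{F\in\mathcal{G}(n,p,q)}\delta(F)$. For $U\subseteq V(G)$, $e(U)$ is the number of edges of $G$ with both ends in $U$, and $d_U(v)=|N_G(v)\cap U|$. $V(G)=V_1\cup\cdots\cup V_p$ is a vertex partition of $G$ into $p$ parts minimizing $\sum_{i=1}^p e(V_i)$ among all partitions of $V(G)$ into $p$ parts. *)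

From HB Require Import structures.
From mathcomp Require Import all_boot all_order all_algebra.
From mathcomp Require Export reals.
Set Implicit Arguments. Unset Strict Implicit. Unset Printing Implicit Defensive.
Import Order.TTheory GRing.Theory Num.Theory.

Definition simple_graph n (g : rel 'I_n) : Prop := symmetric g /\ irreflexive g.

Definition e_in n (g : rel 'I_n) (U : {set 'I_n}) : nat :=
  #|[set x : 'I_n * 'I_n | [&& (x.1 < x.2)%N, g x.1 x.2, x.1 \in U & x.2 \in U]]|.

Definition num_edges n (g : rel 'I_n) : nat := e_in g [set: 'I_n].

Definition deg_in n (g : rel 'I_n) (U : {set 'I_n}) (v : 'I_n) : nat :=
  #|[set u in U | g v u]|.

Definition deg n (g : rel 'I_n) (v : 'I_n) : nat := deg_in g [set: 'I_n] v.

(* minimum degree (n is an upper bound for every degree, so it serves as the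
   neutral element; for n >= 1 this is the usual minimum degree). *)
Definition min_deg n (g : rel 'I_n) : nat := \big[minn/n]_(v : 'I_n) deg g v.

Definition colorable n (g : rel 'I_n) (k : nat) : Prop :=
  exists c : 'I_n -> 'I_k, forall x y, g x y -> c x != c y.

Definition chi_gt n (g : rel 'I_n) (p : nat) : Prop := ~ colorable g p.

(* B_{p,q} = K_p \nabla qK_1 on vertex set 'I_(p+q): vertices < p form the clique,
   vertices >= p the independent set, all clique-independent pairs adjacent. *)
Definition B_edge (p q : nat) : rel 'I_(p + q) :=
  fun i j => (i != j) && ((i < p)%N || (j < p)%N).

Definition contains_B n (g : rel 'I_n) (p q : nat) : Prop :=
  exists f : 'I_(p + q) -> 'I_n,
    injective f /\ forall i j, @B_edge p q i j -> g (f i) (f j).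

Definition admissible n p q (g : rel 'I_n) : Prop :=
  simple_graph g /\ chi_gt g p /\ ~ contains_B g p q.

Definition in_Gnpq n p q (g : rel 'I_n) : Prop :=
  @admissible n p q g /\
  forall h : rel 'I_n, @admissible n p q h -> (num_edges h <= num_edges g)%N.

(* V_i of a partition given as a labelling  part : 'I_n -> 'I_p *)
Definition part_class n p (part : 'I_n -> 'I_p) (i : 'I_p) : {set 'I_n} :=
  [set v | part v == i].

Definition inner_edges n p (g : rel 'I_n) (part : 'I_n -> 'I_p) : nat :=
  \sum_(i < p) e_in g (part_class part i).

Definition min_partition n p (g : rel 'I_n) (part : 'I_n -> 'I_p) : Prop :=
  forall part' : 'I_n -> 'I_p, (inner_edges g part <= inner_edges g part')%N.

Definition W_set (R : realType) n p (g : rel 'I_n) (part : 'I_n -> 'I_p)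
    (eta : R) : {set 'I_n} :=
  [set v | (2 * eta * n%:R <= (deg_in g (part_class part (part v)) v)%:R)%R].

From HB Require Import structures.
From mathcomp Require Import all_boot all_order all_algebra.
From mathcomp Require Import reals.
From mathcomp Require Import zify ring lra.
Import Order.TTheory GRing.Theory Num.Theory.
Set Implicit Arguments. Unset Strict Implicit. Unset Printing Implicit Defensive.

(* The extremal graph G has at least as many edges as the B_{p,q}-free graph obtained from
   the Turan graph T_p(n) by planting a pentagon joined to all classes but two: that graph
   has clique number p and chromatic number p + 1, and at least (1 - 1/p) n^2/2 - O(n)
   edges.  Conversely, colouring recursively the neighbourhood of a vertex of maximum
   degree and the rest with a fresh colour, every B_{p,q}-free graph has a p-colouring
   whose monochromatic edges plus all edges number at most (1 - 1/p) n^2/2 + O(n).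
   Hence a partition minimising the inner edges has only O(n) of them, so O(1/eta)
   vertices have 2 eta n inner neighbours, fewer than eta n / 2 once n is large. *)

Lemma inj_bounded_leq_card (T : finType) (X : {set T}) (h : T -> nat) m :
  {in X &, injective h} -> (forall x, x \in X -> h x < m) -> #|X| <= m.
Proof.
move=> h_inj h_lt; rewrite cardE -(size_map h) -(size_iota 0 m).
apply: uniq_leq_size => [|y /mapP[x]].
  by rewrite map_inj_in_uniq ?enum_uniq // => x y; rewrite !mem_enum; exact: h_inj.
by rewrite mem_enum => /h_lt x_lt ->; rewrite mem_iota add0n.
Qed.

Lemma big_subset_split (T : finType) (S A : {set T}) (F : T -> nat) : A \subset S ->
  \sum_(u in S) F u = \sum_(u in A) F u + \sum_(u in S :\: A) F u.
Proof. by move=> AS; rewrite (big_setID A) /= (setIidPr AS). Qed.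

Section Degrees.
Variables (n : nat) (g : rel 'I_n).
Implicit Types (S : {set 'I_n}) (u v : 'I_n).

Lemma deg_inE S u : deg_in g S u = \sum_(v in S) g u v.
Proof.
rewrite /deg_in -sum1_card [RHS]big_mkcond [LHS]big_mkcond /=.
by apply: eq_bigr => v _; rewrite inE; case: (v \in S); case: (g u v).
Qed.

Definition deg_sum S := \sum_(u in S) deg_in g S u.

Lemma deg_sumE S : deg_sum S = \sum_(u in S) \sum_(v in S) g u v.
Proof. by apply: eq_bigr => u _; rewrite deg_inE. Qed.

Hypothesis g_simple : simple_graph g.

Lemma handshake S : 2 * e_in g S = deg_sum S.
Proof.
have [g_sym g_irr] := g_simple.
pose P (x : 'I_n * 'I_n) := [&& g x.1 x.2, x.1 \in S & x.2 \in S].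
have -> : deg_sum S = \sum_(x : 'I_n * 'I_n) (P x : nat).
  rewrite deg_sumE pair_big /= big_mkcond /=; apply: eq_bigr => x _.
  by rewrite /P; case: (x.1 \in S); case: (x.2 \in S); rewrite ?andbF ?andbT.
have e_inE : e_in g S = \sum_(x : 'I_n * 'I_n) ((x.1 < x.2) && P x : nat).
  by rewrite /e_in -sum1_card big_mkcond /=; apply: eq_bigr => x _; rewrite inE.
have swap : \sum_(x : 'I_n * 'I_n) ((x.2 < x.1) && P x : nat) = e_in g S.
  rewrite e_inE (reindex_inj (h := fun x : 'I_n * 'I_n => (x.2, x.1))) /=; last first.
    by move=> [a b] [c d] /= [-> ->].
  by apply: eq_bigr => x _; rewrite /P /= g_sym (andbC (x.2 \in S)).
rewrite mul2n -addnn {1}e_inE -{}swap -big_split /=; apply: eq_bigr => x _.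
case Px: (P x); rewrite ?andbF //= !andbT.
case: (ltngtP x.1 x.2) => // /val_inj E.
by move: Px; rewrite /P E g_irr.
Qed.

Lemma inner_edges_handshake p (part : 'I_n -> 'I_p) :
  2 * inner_edges g part = \sum_u deg_in g (part_class part (part u)) u.
Proof.
rewrite /inner_edges big_distrr [RHS](partition_big part xpredT) //=.
apply: eq_bigr => i _; rewrite handshake /deg_sum.
by apply: eq_big => [u | u]; rewrite inE // => /eqP ->.
Qed.

End Degrees.

Section BFree.
Variables (n : nat) (g : rel 'I_n).
Implicit Types (S : {set 'I_n}) (u v : 'I_n).

Definition Bfree_in S p q :=
  forall f : 'I_(p + q) -> 'I_n, injective f -> (forall i, f i \in S) ->
    ~ (forall i j, @B_edge p q i j -> g (f i) (f j)).

Lemma Bfree_in_setT p q : ~ contains_B g p q -> Bfree_in setT p q.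
Proof. by move=> noB f f_inj _ f_edge; apply: noB; exists f. Qed.

Lemma Bfree_in0_card S q : Bfree_in S 0 q -> #|S| < q.
Proof.
move=> S_free; rewrite ltnNge; apply/negP => q_le.
apply: (S_free (fun i : 'I_q => enum_val (widen_ord q_le i))).
- by move=> i j /enum_val_inj /(congr1 val) /= /val_inj.
- by move=> i; exact: enum_valP.
- by move=> i j; rewrite /B_edge !ltn0 andbF.
Qed.

Hypothesis g_simple : simple_graph g.

(* A copy of B_{p,q} among the neighbours of u extends by u to a copy of B_{p+1,q}. *)
Lemma Bfree_in_nbr S p q u : u \in S -> Bfree_in S p.+1 q ->
  Bfree_in [set v in S | g u v] p q.
Proof.
have [g_sym g_irr] := g_simple.
move=> uS S_free f f_inj f_nbr f_edge.
have fS i : f i \in S by move: (f_nbr i); rewrite inE => /andP[].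
have uf i : g u (f i) by move: (f_nbr i); rewrite inE => /andP[].
have uf_neq i : u != f i by apply: contraTneq (uf i) => ->; rewrite g_irr.
pose f' (i : 'I_(p + q).+1) := if unlift ord0 i is Some j then f j else u.
apply: (S_free f') => [i j | i | i j]; rewrite /f'.
- case: (unliftP ord0 i) => [i'|] ->; case: (unliftP ord0 j) => [j'|] ->;
    rewrite ?liftK ?unlift_none //.
  + by move/f_inj ->.
  + by move=> E; move: (uf_neq i'); rewrite E eqxx.
  + by move=> E; move: (uf_neq j'); rewrite E eqxx.
- by case: (unlift ord0 i).
- rewrite /B_edge.
  case: (unliftP ord0 i) => [i'|] ->; case: (unliftP ord0 j) => [j'|] ->;
    rewrite ?liftK ?unlift_none //= ?eqxx //.
  + by rewrite (inj_eq (@lift_inj _ ord0)) => /f_edge.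
  + by rewrite g_sym.
Qed.

Lemma Bfree_in1_deg_lt S q u : u \in S -> Bfree_in S 1 q -> deg_in g S u < q.
Proof. by move=> uS /(Bfree_in_nbr uS) /Bfree_in0_card. Qed.

End BFree.

Lemma colouring_step_arith p q D E X Y :
  p.+1 * X <= p * D ^ 2 + 2 * p.+1 ^ 2 * q * D -> Y <= E * D ->
  p.+2 * (X + 2 * Y) <= p.+1 * (D + E) ^ 2 + 2 * p.+2 ^ 2 * q * (D + E).
Proof.
move=> hX hY; rewrite -(leq_pmul2l (ltn0Sn p)).
have amgm : p.+2 * (p * D ^ 2) + p.+1 * (p.+2 * (2 * (E * D))) <= p.+1 * (p.+1 * (D + E) ^ 2).
  move: (nat_Cauchy (p.+1 * E) D).1; nia.
have hq : p.+2 * (2 * p.+1 ^ 2 * q * D) <= p.+1 * (2 * p.+2 ^ 2 * q * (D + E)) by nia.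
have {}hX : p.+1 * (p.+2 * X) <= p.+2 * (p * D ^ 2 + 2 * p.+1 ^ 2 * q * D).
  by rewrite mulnCA leq_pmul2l.
have {}hY : p.+1 * (p.+2 * (2 * Y)) <= p.+1 * (p.+2 * (2 * (E * D))).
  by rewrite !leq_pmul2l // leq_pmul2l.
move: amgm hq hX hY; set a := p.+1; set b := p.+2; rewrite !mulnDr; lia.
Qed.

Section Colouring.
Variables (n : nat) (g : rel 'I_n).
Implicit Types (S A : {set 'I_n}) (u v : 'I_n) (c : 'I_n -> nat).

Definition mono_deg_sum S c := \sum_(u in S) \sum_(v in S) (g u v && (c u == c v)).

Lemma mono_deg_sum_const S k : mono_deg_sum S (fun=> k) = deg_sum g S.
Proof.
by rewrite deg_sumE; apply: eq_bigr => u _; apply: eq_bigr => v _; rewrite eqxx andbT.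
Qed.

Lemma mono_deg_sum_fresh S A c k : A \subset S -> (forall v, c v < k) ->
  mono_deg_sum S (fun v => if v \in A then c v else k) = mono_deg_sum A c + deg_sum g (S :\: A).
Proof.
move=> AS c_lt; rewrite /mono_deg_sum deg_sumE (big_subset_split _ AS).
congr (_ + _); apply: eq_bigr => u; [move=> uA | rewrite inE => /andP[uA _]].
  rewrite (big_subset_split _ AS) [X in _ + X]big1 ?addn0.
    by apply: eq_bigr => v vA; rewrite uA vA.
  by move=> v; rewrite inE uA => /andP[/negbTE -> _]; rewrite (ltn_eqF (c_lt u)) andbF.
rewrite (big_subset_split _ AS) big1 ?add0n.
  by apply: eq_bigr => v; rewrite inE (negbTE uA) => /andP[/negbTE -> _]; rewrite eqxx andbT.
by move=> v vA; rewrite (negbTE uA) vA eq_sym (ltn_eqF (c_lt v)) andbF.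
Qed.

Lemma inner_deg_sum_mono p (part : 'I_n -> 'I_p) :
  \sum_u deg_in g (part_class part (part u)) u = mono_deg_sum setT (fun v => part v).
Proof.
rewrite /mono_deg_sum; apply: eq_big => [u | u _]; first by rewrite inE.
rewrite deg_inE big_mkcond [RHS]big_mkcond /=; apply: eq_bigr => v _.
by rewrite !inE val_eqE eq_sym; case: eqP; rewrite ?andbT ?andbF.
Qed.

Hypothesis g_simple : simple_graph g.

Lemma deg_sum_split S A : A \subset S ->
  deg_sum g S + deg_sum g (S :\: A) = deg_sum g A + 2 * \sum_(u in S :\: A) deg_in g S u.
Proof.
move=> AS; set B := S :\: A; have [g_sym _] := g_simple.
have cross : \sum_(u in A) \sum_(v in B) (g u v : nat) + deg_sum g B = \sum_(u in B) deg_in g S u.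
  rewrite exchange_big deg_sumE -big_split /=; apply: eq_bigr => u _.
  by rewrite deg_inE (big_subset_split _ AS); congr (_ + _); apply: eq_bigr => v _; rewrite g_sym.
have -> : deg_sum g S = deg_sum g A + \sum_(u in A) \sum_(v in B) (g u v : nat) + \sum_(u in B) deg_in g S u.
  rewrite {1}/deg_sum (big_subset_split _ AS) !deg_sumE -big_split /=; congr (_ + _).
  by apply: eq_bigr => u _; rewrite deg_inE; exact: big_subset_split.
lia.
Qed.

Lemma Bfree_in_colouring q p S : Bfree_in g S p.+1 q -> exists c,
  (forall v, c v <= p) /\
  p.+1 * (mono_deg_sum S c + deg_sum g S) <= p * #|S| ^ 2 + 2 * p.+1 ^ 2 * q * #|S|.
Proof.
elim: p S => [|p IH] S S_free.
  exists (fun=> 0); split=> //; rewrite mono_deg_sum_const.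
  have : deg_sum g S <= q * #|S|.
    rewrite /deg_sum mulnC -sum_nat_const; apply: leq_sum => u uS.
    exact: ltnW (Bfree_in1_deg_lt g_simple uS S_free).
  lia.
have [S0 | [x0 x0S]] := set_0Vmem S.
  by exists (fun=> 0); split=> //; rewrite S0 /mono_deg_sum /deg_sum !big_set0 cards0; lia.
have [x xS x_max] := @arg_maxnP _ x0 (mem S) (deg_in g S) x0S.
set A := [set v in S | g x v]; set B := S :\: A.
have AS : A \subset S by apply/subsetP => v; rewrite inE => /andP[].
have [cA [cA_le cA_bound]] := IH A (Bfree_in_nbr g_simple xS S_free).
exists (fun v => if v \in A then cA v else p.+1); split.
  by move=> v; case: (v \in A); [exact: leqW | rewrite leqnn].
have B_deg : \sum_(u in B) deg_in g S u <= #|B| * #|A|.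
  rewrite -sum_nat_const; apply: leq_sum => u; rewrite inE => /andP[_ uS].
  exact: x_max.
have -> : #|S| = #|A| + #|B| by rewrite -(cardsID A S) (setIidPr AS).
rewrite mono_deg_sum_fresh // -addnA [deg_sum g B + _]addnC deg_sum_split // addnA.
exact: colouring_step_arith.
Qed.

End Colouring.

Definition pentagon_adj (u v : nat) := (u.+1 %% 5 == v) || (v.+1 %% 5 == u).

Lemma pentagon_triangle_free a b d : a < 5 -> b < 5 -> d < 5 ->
  pentagon_adj a b -> pentagon_adj b d -> pentagon_adj a d -> False.
Proof.
by do 5?[case: a => [|a]] => //; do 5?[case: b => [|b]] => //; do 5?[case: d => [|d]].
Qed.

(* Vertices 0..4 span a pentagon; a vertex v >= 5 lies in the class v %% p, distinct classes
   are completely joined, and the pentagon is completely joined to the classes 2, ..., p-1. *)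
Definition turan_pentagon_rel p (u v : nat) : bool :=
  if u < 5 then (if v < 5 then pentagon_adj u v else 2 <= v %% p)
  else (if v < 5 then 2 <= u %% p else u %% p != v %% p).

Definition turan_pentagon n p : rel 'I_n := fun u v => turan_pentagon_rel p u v.
Arguments turan_pentagon : clear implicits.

Lemma turan_pentagon_simple n p : simple_graph (turan_pentagon n p).
Proof.
split=> [u v | u]; rewrite /turan_pentagon /turan_pentagon_rel.
  by case: (u < 5); case: (v < 5); rewrite // 1?eq_sym // /pentagon_adj orbC.
by case: ltnP => [|_]; [case: (nat_of_ord u) => [|[|[|[|[|]]]]] | rewrite eqxx].
Qed.

Section NoProperColouring.
Variables (p N : nat) (col : nat -> nat).
Hypotheses (p_gt2 : 2 < p) (N_ge : 6 * p <= N) (col_lt : forall a, col a < p).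
Hypothesis col_proper : forall a b, a < N -> b < N ->
  turan_pentagon_rel p a b -> col a != col b.

(* Together with one vertex from each of the classes 2, ..., p-1, a rainbow triple of the
   pentagon would give p+1 vertices of distinct colours. *)
Lemma pentagon_no_rainbow_triple a b d : a < 5 -> b < 5 -> d < 5 ->
  col a != col b -> col b != col d -> col a != col d -> False.
Proof.
move=> a5 b5 d5 ab bd ad.
pose vx (i : nat) := if i < 3 then nth 0 [:: a; b; d] i else 5 * p + i.-1.
have vx_small i : i < 3 -> vx i < 5.
  by rewrite /vx => ->; case: i => [|[|[|i]]] //=; rewrite nth_nil.
have vx_big i : 3 <= i -> vx i = 5 * p + i.-1 by rewrite /vx => /leq_gtF ->.
have vx_lt (i : 'I_p.+1) : vx i < N.
  have := ltn_ord i; case: (ltnP i 3) => [/vx_small | /vx_big ->]; lia.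
have vx_class (i : 'I_p.+1) : 3 <= i -> (vx i < 5) = false /\ vx i %% p = i.-1.
  move=> i3; have ip := ltn_ord i; rewrite vx_big // modnMDl modn_small; last lia.
  by split=> //; apply/negbTE; lia.
have big_adj (i j : 'I_p.+1) : 3 <= j -> i != j -> turan_pentagon_rel p (vx i) (vx j).
  move=> j3 ij; have ij' : (i : nat) != j by [].
  rewrite /turan_pentagon_rel; have [-> ->] := vx_class j j3.
  case: (ltnP i 3) => i3; first by rewrite vx_small //; lia.
  by have [-> ->] := vx_class i i3; lia.
suff : p.+1 <= p by rewrite ltnn.
have := @inj_bounded_leq_card _ [set: 'I_p.+1] (fun i => col (vx i)) p.
rewrite cardsT card_ord; apply=> // i j _ _ /eqP; apply: contraTeq => ij.
case: (ltnP j 3) => j3; last exact: col_proper (vx_lt i) (vx_lt j) (big_adj i j j3 ij).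
case: (ltnP i 3) => i3.
  move: ij; rewrite /vx i3 j3 -(inj_eq val_inj) /=.
  by case: (nat_of_ord i) i3 => [|[|[|]]] //; case: (nat_of_ord j) j3 => [|[|[|]]] //=;
    rewrite // eq_sym.
rewrite eq_sym; apply: col_proper (vx_lt j) (vx_lt i) (big_adj j i i3 _).
by rewrite eq_sym.
Qed.

Lemma turan_pentagon_no_proper_colouring : False.
Proof.
have edge a b : a < 5 -> b < 5 -> pentagon_adj a b -> col a != col b.
  by move=> a5 b5 ab; apply: col_proper; rewrite /turan_pentagon_rel ?a5 ?b5 //; lia.
have c02 : col 0 = col 2.
  by apply/eqP/contraT => c02; case: (@pentagon_no_rainbow_triple 0 1 2) => //; rewrite edge.
have c24 : col 2 = col 4.
  by apply/eqP/contraT => c24; case: (@pentagon_no_rainbow_triple 2 3 4) => //; rewrite edge.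
by move: (edge 4 0 isT isT isT); rewrite -c24 -c02 eqxx.
Qed.

End NoProperColouring.

Lemma turan_pentagon_chi_gt n p : 2 < p -> 6 * p <= n -> chi_gt (turan_pentagon n p) p.
Proof.
move=> p_gt2 np [c c_proper].
pose col (a : nat) := if insub a is Some v then c v : nat else 0.
apply: (@turan_pentagon_no_proper_colouring p n col) => // [a | a b an bn ab].
  by rewrite /col; case: insub => [v|]; [exact: ltn_ord | lia].
have colE (v : 'I_n) : col v = c v by rewrite /col valK.
by rewrite -[a]/(Ordinal an : nat) -[b]/(Ordinal bn : nat) !colE; exact: c_proper.
Qed.

(* A clique meets the pentagon in at most two vertices, labelled 0 and 1; its other
   vertices lie in pairwise distinct classes, all >= 2 if the pentagon is met. *)
Lemma turan_pentagon_rel_clique_free p (k : 'I_p.+1 -> nat) : 1 < p ->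
  ~ (forall i j, i != j -> turan_pentagon_rel p (k i) (k j)).
Proof.
move=> p_gt1 k_clique.
pose i0 := [pick i | k i < 5].
pose lab i := if k i < 5 then (Some i != i0 : nat) else k i %% p.
have i0P i : k i < 5 -> exists2 j, i0 = Some j & k j < 5.
  by rewrite /i0 => ki5; case: pickP => [j kj5 | /(_ i)]; [exists j | rewrite ki5].
have small_adj i j : i != j -> k i < 5 -> k j < 5 -> pentagon_adj (k i) (k j).
  by move=> ij ki5 kj5; move: (k_clique i j ij); rewrite /turan_pentagon_rel ki5 kj5.
have small_big i j : k i < 5 -> 5 <= k j -> 1 < k j %% p.
  move=> ki5 kj5; have ij : i != j by apply: contraTneq kj5 => <-; rewrite -ltnNge.
  by have := k_clique i j ij; rewrite /turan_pentagon_rel ki5 (leq_gtF kj5).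
suff : p.+1 <= p by rewrite ltnn.
have := @inj_bounded_leq_card _ [set: 'I_p.+1] lab p; rewrite cardsT card_ord; apply.
  move=> i j _ _; apply: contra_eq => ij; rewrite /lab.
  case: (ltnP (k i) 5) => ki5; case: (ltnP (k j) 5) => kj5.
  - have [i1 -> ki1] := i0P i ki5; rewrite !(inj_eq Some_inj).
    have [<- | ii1] := eqVneq i i1; first by rewrite eq_sym in ij; rewrite ij.
    have [// | ji1] := eqVneq j i1.
    case: (pentagon_triangle_free ki5 kj5 ki1 (small_adj _ _ ij ki5 kj5)
      (small_adj _ _ ji1 kj5 ki1) (small_adj _ _ ii1 ki5 ki1)).
  - by have := small_big i j ki5 kj5; case: (Some i != i0); lia.
  - by have := small_big j i kj5 ki5; case: (Some j != i0); lia.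
  - by have := k_clique i j ij; rewrite /turan_pentagon_rel (leq_gtF ki5) (leq_gtF kj5).
by move=> i _; rewrite /lab; case: (k i < 5); [case: (Some i != i0) | rewrite ltn_mod]; lia.
Qed.

Lemma turan_pentagon_B_free n p q : 1 < p -> 0 < q -> ~ contains_B (turan_pentagon n p) p q.
Proof.
move=> p_gt1 q_gt0 [f [_ f_edge]].
have wq : p.+1 <= p + q by lia.
apply: (@turan_pentagon_rel_clique_free p (fun i => f (widen_ord wq i))) => // i j ij.
apply: (f_edge (widen_ord wq i) (widen_ord wq j)); rewrite /B_edge /=.
have := ltn_ord i; have := ltn_ord j; have : (i : nat) != j by [].
by rewrite -(inj_eq val_inj) /=; lia.
Qed.

Lemma turan_pentagon_admissible n p q : 2 < p -> 0 < q -> 6 * p <= n ->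
  admissible p q (turan_pentagon n p).
Proof.
move=> p_gt2 q_gt0 np; split; first exact: turan_pentagon_simple.
by split; [exact: turan_pentagon_chi_gt | apply: turan_pentagon_B_free; lia].
Qed.

Lemma card_small_vertices n : #|[set v : 'I_n | v < 5]| <= 5.
Proof. by apply: (@inj_bounded_leq_card _ _ val) => [v w _ _ /val_inj | v]; rewrite ?inE. Qed.

Lemma card_residue_class n p r : 0 < p -> #|[set v : 'I_n | v %% p == r]| <= n %/ p + 1.
Proof.
move=> p_gt0; apply: (@inj_bounded_leq_card _ _ (fun v : 'I_n => v %/ p)).
  move=> v w; rewrite !inE => /eqP vr /eqP wr vw; apply: val_inj => /=.
  by rewrite (divn_eq v p) (divn_eq w p) vw vr wr.
by move=> v _; rewrite addn1 ltnS leq_div2r // ltnW.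
Qed.

(* A vertex outside the pentagon misses only the pentagon and its own class. *)
Lemma turan_pentagon_deg n p (u : 'I_n) : 0 < p -> 5 <= u ->
  n <= deg_in (turan_pentagon n p) setT u + 6 + n %/ p.
Proof.
move=> p_gt0 u5; set N := [set v in setT | turan_pentagon n p u v].
have non_nbr : ~: N \subset [set v : 'I_n | v < 5] :|: [set v : 'I_n | v %% p == u %% p].
  apply/subsetP => v; rewrite !inE /turan_pentagon /turan_pentagon_rel (leq_gtF u5).
  by case: (v < 5) => //=; rewrite negbK eq_sym.
have := leq_trans (subset_leq_card non_nbr) (leq_card_setU _ _).
have := cardsC N; rewrite card_ord /deg_in -/N.
have := card_small_vertices n; have := card_residue_class n (u %% p) p_gt0.
set d := #|N|; lia.
Qed.

Lemma deg_sum_arith p n m t D : m <= n -> n <= m + 5 -> t * p <= n ->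
  m * n <= D + m * (6 + t) -> p * n ^ 2 <= p * D + 11 * p * n + n ^ 2.
Proof.
move=> mn nm tp hD.
have : p * (m * n) <= p * D + 6 * p * n + m * n.
  have : m * (t * p) <= m * n by rewrite leq_mul2l tp orbT.
  have : p * m <= p * n by rewrite leq_mul2l mn orbT.
  nia.
have : p * n * n <= p * (m * n) + 5 * p * n.
  have : p * n * n <= p * n * (m + 5) by rewrite leq_mul2l nm orbT.
  nia.
have : m * n <= n * n by rewrite leq_mul2r mn orbT.
nia.
Qed.

Lemma turan_pentagon_deg_sum n p : 0 < p ->
  p * n ^ 2 <= p * deg_sum (turan_pentagon n p) setT + 11 * p * n + n ^ 2.
Proof.
move=> p_gt0; set g := turan_pentagon n p; set big := ~: [set v : 'I_n | v < 5].
set D := \sum_(u in big) deg_in g setT u.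
have big_card : n <= #|big| + 5.
  have := cardsC [set v : 'I_n | v < 5]; have := card_small_vertices n.
  by rewrite card_ord -/big; lia.
have D_le : D <= deg_sum g setT.
  by rewrite /deg_sum (big_subset_split _ (subsetT big)) leq_addr.
have D_ge : #|big| * n <= D + #|big| * (6 + n %/ p).
  rewrite -!sum_nat_const -big_split /=; apply: leq_sum => u; rewrite !inE -leqNgt => u5.
  by rewrite addnA; exact: turan_pentagon_deg.
have big_le : #|big| <= n by rewrite -[X in _ <= X]card_ord max_card.
apply: leq_trans (deg_sum_arith big_le big_card (leq_divM n p) D_ge) _.
by rewrite !leq_add2r leq_mul2l D_le orbT.
Qed.

Lemma Gnpq_deg_sum_ge n p q (g : rel 'I_n) : 2 < p -> 0 < q -> 6 * p <= n ->
  in_Gnpq p q g -> p * n ^ 2 <= p * deg_sum g setT + 11 * p * n + n ^ 2.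
Proof.
move=> p_gt2 q_gt0 np [[g_simple _] g_max].
apply: leq_trans (turan_pentagon_deg_sum n (ltnW (ltnW p_gt2))) _.
rewrite !leq_add2r leq_mul2l -!handshake //; last exact: turan_pentagon_simple.
by rewrite leq_mul2l g_max ?orbT //; exact: turan_pentagon_admissible.
Qed.

Lemma min_partition_inner_deg_sum_le n p (g : rel 'I_n) (part : 'I_n -> 'I_p)
    (c : 'I_n -> nat) : simple_graph g -> min_partition g part -> (forall v, c v < p) ->
  \sum_u deg_in g (part_class part (part u)) u <= mono_deg_sum g setT c.
Proof.
move=> g_simple part_min c_lt; have := part_min (fun v => Ordinal (c_lt v)).
by rewrite -(leq_pmul2l (isT : 0 < 2)) !inner_edges_handshake // !inner_deg_sum_mono.
Qed.

Lemma Gnpq_inner_deg_sum_le n p q (g : rel 'I_n) (part : 'I_n -> 'I_p) :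
  2 < p -> 0 < q -> 6 * p <= n -> in_Gnpq p q g -> min_partition g part ->
  \sum_u deg_in g (part_class part (part u)) u <= (2 * p * q + 11) * n.
Proof.
move=> p_gt2 q_gt0 np g_Gnpq part_min; have [[g_simple [_ g_Bfree]] _] := g_Gnpq.
have p_pos : p.-1.+1 = p := prednK (ltnW (ltnW p_gt2)).
have g_Bfree' : Bfree_in g setT p.-1.+1 q by rewrite p_pos; exact: Bfree_in_setT.
have [c [c_le c_bound]] := Bfree_in_colouring g_simple g_Bfree'.
have c_lt v : c v < p by rewrite -p_pos ltnS.
apply: leq_trans (min_partition_inner_deg_sum_le g_simple part_min c_lt) _.
rewrite cardsT card_ord p_pos in c_bound; rewrite -(leq_pmul2l (ltnW (ltnW p_gt2))).
have := Gnpq_deg_sum_ge p_gt2 q_gt0 np g_Gnpq.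
have : p.-1 * n ^ 2 + n ^ 2 = p * n ^ 2 by rewrite -[in RHS]p_pos mulSn addnC.
have : p * ((2 * p * q + 11) * n) = 2 * p ^ 2 * q * n + 11 * p * n by ring.
lia.
Qed.

Lemma W_set_card_mul (R : realType) n p (g : rel 'I_n) (part : 'I_n -> 'I_p) (eta : R) :
  (#|W_set g part eta|%:R * (2 * eta * n%:R) <=
   (\sum_u deg_in g (part_class part (part u)) u)%:R)%R.
Proof.
rewrite mulr_natl -sumr_const natr_sum.
apply: (le_trans (y := (\sum_(u in W_set g part eta) (deg_in g (part_class part (part u)) u)%:R)%R)).
  by apply: ler_sum => u; rewrite inE.
by rewrite [X in (_ <= X)%R](bigID (mem (W_set g part eta))) /= lerDl sumr_ge0.
Qed.

Unset Implicit Arguments.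

Theorem lemma3p3 (R : realType) (p q : nat) (eta : R) :
  (3 <= p)%N -> (1 <= q)%N ->
  (0 < eta)%R -> (eta < 1 / (7 * p ^ 5 * q)%:R)%R ->
  exists N : nat, forall n : nat, (N <= n)%N ->
  forall (g : rel 'I_n) (part : 'I_n -> 'I_p),
    in_Gnpq p q g ->
    (forall F : rel 'I_n, in_Gnpq p q F -> (min_deg g <= min_deg F)%N) ->
    min_partition g part ->
    ((#|W_set g part eta|)%:R <= eta * n%:R / 2)%R.
Proof.
move=> p_gt2 q_gt0 eta_gt0 _.
set K := (2 * p * q + 11)%N.
exists (maxn (6 * p) (Num.Def.truncn ((K%:R : R) / eta ^+ 2)).+1).
move=> n; rewrite geq_max => /andP[np nK] g part g_Gnpq _ part_min.
have W_le : (#|W_set g part eta|%:R * (2 * eta * n%:R) <= (K * n)%:R :> R)%R.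
  apply: le_trans (W_set_card_mul g part eta) _.
  by rewrite ler_nat Gnpq_inner_deg_sum_le.
have K_lt : ((K%:R : R) < eta ^+ 2 * n%:R)%R.
  move: nK; rewrite -[_.+1 <= n]/(_ < n)%N truncn_lt_nat; last by rewrite divr_ge0 // sqr_ge0.
  by rewrite ltr_pdivrMr ?exprn_gt0 // mulrC.
have n_gt0 : (0 < n%:R :> R)%R by rewrite ltr0n; lia.
have {}W_le : (#|W_set g part eta|%:R * (2 * eta) <= K%:R :> R)%R.
  by rewrite -(ler_pM2r n_gt0) -mulrA -natrM.
move: W_le K_lt; rewrite expr2; nra.
Qed.
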